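(* Fix finite $\mathcal{S}$, $\mathcal{A}$, $d_0\in\Delta(\mathcal{S})$, $\gamma\in[0,1)$ and a reward $\mathcal{R}:\mathcal{S}\times\mathcal{A}\to[0,1]$. Let $\mathcal{T}\neq\mathcal{T}'$ be transition models and $\delta=\frac12\max_{s,a}\|\mathcal{T}(\cdot\mid s,a)-\mathcal{T}'(\cdot\mid s,a)\|_1>0$. For $\varepsilon>0$ define $$H(\varepsilon,\delta)=\frac{(1+\varepsilon)+\sqrt{(1-\varepsilon)^2+4\varepsilon/\delta}}{2}.$$ If $1/(1-\gamma)\le H(\varepsilon,\delta)$, then $(\mathcal{T},\mathcal{T}')$ is $\varepsilon$-unexploitable relative to every policy set $\Pi$ and the task $(\mathcal{S},\mathcal{A},\_,d_0,\mathcal{R},\gamma)$. Moreover, the bound is tight: for every $\delta\in(0,1]$, $\varepsilon>0$ and $\gamma$ with $1/(1-\gamma)>H(\varepsilon,\delta)$, there exist a task with reward in $[0,1]$ (namely $\mathcal{S}=\mathcal{A}=\{0,1\}$, $d_0(0)=1$, $\mathcal{R}(s,a)=\mathbb{1}\{s=0\}$) and transition models $\mathcal{T}_1,\mathcal{T}_2$ with $\frac12\max_{s,a}\|\mathcal{T}_1(\cdot\mid s,a)-\mathcal{T}_2(\cdot\mid s,a)\|_1=\delta$ that are $\varepsilon$-exploitable relative to the set of stationary policies; specifically, state $1$ absorbing under both, and at state $0$: under $\mathcal{T}_1$ action $0$ self-loops and action $1$ moves to state $1$ with probability $\delta$ (else stays), while under $\mathcal{T}_2$ the roles of the two actions ar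e swapped.
   Context: For a transition model $\mathcal{T}$ and policy $\pi$ (stationary, or non-stationary $\pi=(\pi_0,\pi_1,\dots)$), $J_{\mathcal{T}}(\pi)=\mathbb{E}\big[\sum_{t\ge0}\gamma^t\mathcal{R}(s_t,a_t)\big]$ with $s_0\sim d_0$, $a_t\sim\pi_t(\cdot\mid s_t)$, $s_{t+1}\sim\mathcal{T}(\cdot\mid s_t,a_t)$. A task is an MDP without transition model, $(\mathcal{S},\mathcal{A},\_,d_0,\mathcal{R},\gamma)$; a policy set is any set of such policies. $(\mathcal{T},\mathcal{T}')$ is $\varepsilon$-exploitable relative to $\Pi$ and a task if there exist $\pi,\pi'\in\Pi$ with $J_{\mathcal{T}}(\pi)-J_{\mathcal{T}}(\pi')>\varepsilon$ and $J_{\mathcal{T}'}(\pi')-J_{\mathcal{T}'}(\pi)>\varepsilon$; otherwise $\varepsilon$-unexploitable. *)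

From HB Require Import structures.
From mathcomp Require Import all_boot all_order all_algebra.
From mathcomp Require Import all_classical all_reals all_analysis.
Set Implicit Arguments. Unset Strict Implicit. Unset Printing Implicit Defensive.
Import Order.TTheory GRing.Theory Num.Theory.
Import numFieldNormedType.Exports.
Local Open Scope classical_set_scope.
Local Open Scope ring_scope.

Section MDP.
Variables (R : realType) (S A : finType).

Definition is_dist (T : finType) (p : T -> R) : Prop :=
  (forall x, 0 <= p x) /\ \sum_(x : T) p x = 1.

(** transition model T(s' | s, a) written  T s a s' *)
Definition is_transition (T : S -> A -> S -> R) : Prop :=
  forall s a, is_dist (T s a).

(** (possibly non-stationary) policy pi_t(a | s) written  pi t s a *)
Definition policy := nat -> S -> A -> R.

Definition is_policy (pi : policy) : Prop :=
  forall t s, is_dist (pi t s).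

Definition is_stationary (pi : policy) : Prop :=
  forall t, pi t = pi 0%N.

Fixpoint state_dist (d0 : S -> R) (T : S -> A -> S -> R) (pi : policy)
    (t : nat) : S -> R :=
  match t with
  | 0%N => d0
  | t'.+1 => fun s' => \sum_(s : S) \sum_(a : A)
        state_dist d0 T pi t' s * pi t' s a * T s a s'
  end.

Definition step_reward (d0 : S -> R) (Rw : S -> A -> R) (gamma : R)
    (T : S -> A -> S -> R) (pi : policy) (t : nat) : R :=
  gamma ^+ t * \sum_(s : S) \sum_(a : A) state_dist d0 T pi t s * pi t s a * Rw s a.

Definition J (d0 : S -> R) (Rw : S -> A -> R) (gamma : R)
    (T : S -> A -> S -> R) (pi : policy) : R :=
  limn (series (step_reward d0 Rw gamma T pi)).

Definition exploitable (d0 : S -> R) (Rw : S -> A -> R) (gamma : R)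
    (Pi : set policy) (T T' : S -> A -> S -> R) (eps : R) : Prop :=
  exists pi pi', Pi pi /\ Pi pi' /\
    J d0 Rw gamma T pi - J d0 Rw gamma T pi' > eps /\
    J d0 Rw gamma T' pi' - J d0 Rw gamma T' pi > eps.

Definition unexploitable d0 Rw gamma Pi T T' eps : Prop :=
  ~ exploitable d0 Rw gamma Pi T T' eps.

Definition tv_max (T T' : S -> A -> S -> R) : R :=
  2^-1 * \big[Num.max/0]_(s : S) \big[Num.max/0]_(a : A)
    \sum_(s' : S) `|T s a s' - T' s a s'|.

End MDP.

Definition Hbound (R : realType) (eps delta : R) : R :=
  ((1 + eps) + Num.sqrt ((1 - eps) ^+ 2 + 4 * eps / delta)) / 2.

Definition ex_d0 (R : realType) : 'I_2 -> R := fun s => if s == ord0 then 1 else 0.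
Definition ex_R (R : realType) : 'I_2 -> 'I_2 -> R :=
  fun s _ => if s == ord0 then 1 else 0.

Definition ex_T (R : realType) (delta : R) (good : 'I_2) : 'I_2 -> 'I_2 -> 'I_2 -> R :=
  fun s a s' =>
    if s == ord0 then
      (if a == good then (if s' == ord0 then 1 else 0)
       else (if s' == ord0 then 1 - delta else delta))
    else (if s' == ord0 then 0 else 1).

Definition ex_T1 (R : realType) (delta : R) := ex_T delta ord0.
Definition ex_T2 (R : realType) (delta : R) := ex_T delta (@Ordinal 2 1 isT).

From mathcomp Require Import all_boot all_order all_algebra.
From mathcomp Require Import all_classical all_reals all_analysis.
From mathcomp Require Import ring lra.
Set Implicit Arguments. Unset Strict Implicit. Unset Printing Implicit Defensive.
Import Order.TTheory GRing.Theory Num.Theory.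
Import numFieldNormedType.Exports.
Local Open Scope classical_set_scope.
Local Open Scope ring_scope.

(* Fix a policy and run it under T and under T'.  The overlap of the two state
   distributions, sum_s min (d_t s) (d'_t s), loses at most a factor (1 - delta) per
   step, since every transition kernel pair overlaps by at least 1 - delta; hence the
   step-t rewards differ by at most gamma^t (1 - (1 - delta)^t), and
   J_T(pi) - J_T'(pi) <= 1/(1 - gamma) - 1/(1 - gamma (1 - delta)).  Exploitability
   needs two such gaps, one in each model, above eps, and with h = 1/(1 - gamma) the
   gap is at most eps exactly when delta (h - 1) (h - eps) <= eps, i.e. h <= H(eps, delta).
   In the two-state example the stationary policies that always play 0 or always play 1
   attain the gap, so the bound is sharp. *)

Section Horizon.
Variables (R : realType) (eps delta : R).
Hypotheses (eps_gt0 : 0 < eps) (delta_gt0 : 0 < delta).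

Let r := Num.sqrt ((1 - eps) ^+ 2 + 4 * eps / delta).

Let r_sqr : r ^+ 2 = (1 - eps) ^+ 2 + 4 * eps / delta.
Proof. by rewrite sqr_sqrtr // addr_ge0 ?sqr_ge0 // divr_ge0 // ?mulr_ge0 // ltW. Qed.

(* [Hbound eps delta] and [1 + eps - Hbound eps delta] are the two roots of
   [(h - 1) * (h - eps) = eps / delta]. *)
Lemma Hbound_factor (h : R) :
  (h - 1) * (h - eps) - eps / delta =
  (h - Hbound eps delta) * (h - (1 + eps - Hbound eps delta)).
Proof.
have -> : eps / delta = (r ^+ 2 - (1 - eps) ^+ 2) / 4.
  by rewrite r_sqr; field; rewrite gt_eqF.
by rewrite /Hbound -/r; field.
Qed.

Lemma eps_lt_Hbound : eps < Hbound eps delta.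
Proof.
have r0 : 0 <= r := sqrtr_ge0 _.
have k : 0 < eps / delta by rewrite divr_gt0.
suff : eps - 1 < r by rewrite /Hbound -/r; lra.
have := r_sqr; nra.
Qed.

Lemma le_Hbound (h : R) : 1 <= h ->
  (h <= Hbound eps delta) = (delta * ((h - 1) * (h - eps)) <= eps).
Proof.
move=> h1; have eH := eps_lt_Hbound.
have -> : (delta * ((h - 1) * (h - eps)) <= eps) =
          ((h - 1) * (h - eps) - eps / delta <= 0).
  by rewrite subr_le0 mulrC ler_pdivlMr.
by rewrite Hbound_factor pmulr_lle0 ?subr_le0 // subr_gt0; lra.
Qed.
End Horizon.

Definition discount_gap (R : realType) (gamma delta : R) :=
  (1 - gamma)^-1 - (1 - gamma * (1 - delta))^-1.

Lemma discount_gap_le (R : realType) (gamma delta eps : R) :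
  0 <= gamma < 1 -> 0 < delta -> 0 < eps ->
  (discount_gap gamma delta <= eps) = ((1 - gamma)^-1 <= Hbound eps delta).
Proof.
move=> /andP[g0 g1] d0 e0; rewrite /discount_gap.
have b0 : 0 < 1 - gamma by rewrite subr_gt0.
have a0 : 0 < 1 - gamma * (1 - delta) by nra.
set h := (1 - gamma)^-1; set a := 1 - gamma * (1 - delta).
have hb : h * (1 - gamma) = 1 by rewrite mulVf ?gt_eqF.
have h0 : 0 < h by rewrite invr_gt0.
have h1 : 1 <= h by nra.
have ha : h * a = 1 + (h - 1) * delta by rewrite /a; nra.
rewrite le_Hbound // -(ler_pM2r a0) mulrBl mulVf ?gt_eqF // -(ler_pM2r h0).
have -> : (h * a - 1) * h = delta * (h - 1) * h by rewrite ha; ring.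
have -> : eps * a * h = eps * (1 + (h - 1) * delta) by rewrite -ha; ring.
apply/idP/idP => H; lra.
Qed.

Section TotalVariation.
Variables (R : realType) (S A : finType).
Implicit Types (T U : S -> A -> S -> R).

Lemma tv_maxC T U : tv_max T U = tv_max U T.
Proof. by rewrite /tv_max; under eq_bigr do under eq_bigr do under eq_bigr do rewrite distrC. Qed.

Lemma sum_distB_le_tv_max T U s a :
  \sum_s' `|T s a s' - U s a s'| <= tv_max T U * 2.
Proof.
rewrite /tv_max mulrC mulrA mulfV ?pnatr_eq0 // mul1r.
apply: le_trans (le_bigmax 0 _ s).
exact: (le_bigmax 0 (fun a => \sum_s' `|T s a s' - U s a s'|) a).
Qed.

Lemma tv_max_ge0 T U : 0 <= tv_max T U.
Proof. by rewrite /tv_max mulr_ge0 // bigmax_ge_id. Qed.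

Lemma tv_max_le1 T U : is_transition T -> is_transition U -> tv_max T U <= 1.
Proof.
move=> hT hU; rewrite /tv_max ler_pdivrMl // mulr1.
apply: bigmax_le => // s _; apply: bigmax_le => // a _.
case: (hT s a) => T0 T1; case: (hU s a) => U0 U1.
rewrite -[2]/(1 + 1) -{1}T1 -U1 -big_split /=.
apply: ler_sum => s' _; apply: le_trans (ler_normB _ _) _.
by rewrite !ger0_norm.
Qed.
End TotalVariation.

Lemma sum_min_ge (R : realType) (I : finType) (p q : I -> R) (delta : R) :
  is_dist p -> is_dist q -> \sum_i `|p i - q i| <= delta * 2 ->
  1 - delta <= \sum_i Num.min (p i) (q i).
Proof.
move=> [_ p1] [_ q1] hpq.
under eq_bigr do rewrite minr_absE.
by rewrite -mulr_suml sumrB big_split /= p1 q1 ler_pdivlMr //; lra.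
Qed.

Lemma sum_weighted_diff_le (R : realType) (I : finType) (p q r : I -> R) :
  (forall i, 0 <= p i) -> (forall i, 0 <= q i) -> \sum_i p i = 1 ->
  (forall i, 0 <= r i <= 1) ->
  \sum_i p i * r i - \sum_i q i * r i <= 1 - \sum_i Num.min (p i) (q i).
Proof.
move=> p0 q0 p1 r01; rewrite -p1 -!sumrB; apply: ler_sum => i _.
have := r01 i; have := p0 i; have := q0 i.
rewrite minr_absE; case: (leP (p i) (q i)) => [pq|/ltW qp].
  by rewrite ler0_norm ?subr_le0 //; nra.
by rewrite ger0_norm ?subr_ge0 //; nra.
Qed.

Lemma lim_geometric_series (R : realType) (z : R) :
  `|z| < 1 -> limn (series (geometric 1 z)) = (1 - z)^-1.
Proof. by move=> z1; rewrite (cvg_lim _ (@cvg_geometric_series _ 1 _ z1)) ?mul1r. Qed.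

Section PolicyEvaluation.
Variables (R : realType) (S A : finType) (d0 : S -> R) (pi : policy R S A).
Hypotheses (d0_dist : is_dist d0) (pi_policy : is_policy pi).
Implicit Types (T U : S -> A -> S -> R).

Lemma state_dist_ge0 T : is_transition T -> forall t s, 0 <= state_dist d0 T pi t s.
Proof.
move=> hT; elim=> [|t IH] s /=; first by case: d0_dist.
apply: sumr_ge0 => s1 _; apply: sumr_ge0 => a _.
by rewrite !mulr_ge0 //; [case: (pi_policy t s1)|case: (hT s1 a)].
Qed.

Lemma state_dist_sum1 T : is_transition T -> forall t, \sum_s state_dist d0 T pi t s = 1.
Proof.
move=> hT; elim=> [|t IH] /=; first by case: d0_dist.
rewrite exchange_big /= -IH; apply: eq_bigr => s _; rewrite exchange_big /=.
transitivity (\sum_a state_dist d0 T pi t s * pi t s a).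
  by apply: eq_bigr => a _; rewrite -mulr_sumr; case: (hT s a) => _ ->; rewrite mulr1.
by rewrite -mulr_sumr; case: (pi_policy t s) => _ ->; rewrite mulr1.
Qed.

Definition overlap T U t :=
  \sum_s Num.min (state_dist d0 T pi t s) (state_dist d0 U pi t s).

Section Overlap.
Variables (T U : S -> A -> S -> R).
Hypotheses (T_trans : is_transition T) (U_trans : is_transition U).

Let m t s := Num.min (state_dist d0 T pi t s) (state_dist d0 U pi t s).

Lemma min_state_dist_succ_ge t s' :
  \sum_s \sum_a m t s * pi t s a * Num.min (T s a s') (U s a s') <= m t.+1 s'.
Proof.
have hm s : 0 <= m t s by rewrite le_min !state_dist_ge0.
have hpi s a : 0 <= pi t s a by case: (pi_policy t s).
have hmin s a : 0 <= Num.min (T s a s') (U s a s').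
  by rewrite le_min; case: (T_trans s a) => -> _; case: (U_trans s a) => -> _.
rewrite /m in hm *; rewrite le_min /=; apply/andP; split;
  apply: ler_sum => s _; apply: ler_sum => a _;
  by apply: ler_pM; rewrite ?mulr_ge0 ?ler_wpM2r ?ge_min ?lexx ?orbT.
Qed.

Lemma overlap_succ_ge t : (1 - tv_max T U) * overlap T U t <= overlap T U t.+1.
Proof.
have hm s : 0 <= m t s by rewrite le_min !state_dist_ge0.
have hpi s a : 0 <= pi t s a by case: (pi_policy t s).
apply: le_trans (ler_sum _ (fun s' _ => min_state_dist_succ_ge t s')).
rewrite exchange_big /= mulr_sumr; apply: ler_sum => s _; rewrite exchange_big /=.
have -> : (1 - tv_max T U) * m t s = \sum_a m t s * pi t s a * (1 - tv_max T U).
  by rewrite -mulr_suml -mulr_sumr (proj2 (pi_policy t s)) mulr1 mulrC.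
apply: ler_sum => a _; rewrite -mulr_sumr ler_wpM2l ?mulr_ge0 //.
by apply: sum_min_ge => //; apply: sum_distB_le_tv_max.
Qed.

Lemma overlap_ge_pow t : (1 - tv_max T U) ^+ t <= overlap T U t.
Proof.
elim: t => [|t IH].
  by rewrite /overlap /= expr0; under eq_bigr do rewrite minxx; case: d0_dist => _ ->.
rewrite exprS; apply: le_trans (overlap_succ_ge t); apply: ler_wpM2l => //.
by rewrite subr_ge0 tv_max_le1.
Qed.
End Overlap.

Variables (Rw : S -> A -> R) (gamma : R).
Hypotheses (Rw01 : forall s a, 0 <= Rw s a <= 1) (gamma01 : 0 <= gamma < 1).

Let r t s := \sum_a pi t s a * Rw s a.

Lemma policy_reward01 t s : 0 <= r t s <= 1.
Proof.
have hpi a : 0 <= pi t s a by case: (pi_policy t s).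
rewrite sumr_ge0 => [|a _]; last by rewrite mulr_ge0 //; case/andP: (Rw01 s a).
rewrite -(proj2 (pi_policy t s)) ler_sum // => a _.
by rewrite ler_piMr //; case/andP: (Rw01 s a).
Qed.

Lemma step_rewardE T t :
  step_reward d0 Rw gamma T pi t = gamma ^+ t * \sum_s state_dist d0 T pi t s * r t s.
Proof.
congr (_ * _); apply: eq_bigr => s _.
by rewrite mulr_sumr; apply: eq_bigr => a _; rewrite mulrA.
Qed.

Lemma step_reward_ge0 T : is_transition T -> forall t,
  0 <= step_reward d0 Rw gamma T pi t.
Proof.
move=> hT t; rewrite step_rewardE mulr_ge0 ?exprn_ge0 //; first by case/andP: gamma01.
by apply: sumr_ge0 => s _; rewrite mulr_ge0 ?state_dist_ge0 //; case/andP: (policy_reward01 t s).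
Qed.

Lemma step_reward_le T : is_transition T -> forall t,
  step_reward d0 Rw gamma T pi t <= geometric 1 gamma t.
Proof.
have g0 : 0 <= gamma by case/andP: gamma01.
move=> hT t; rewrite step_rewardE /geometric /= mul1r ler_piMr ?exprn_ge0 //.
rewrite -(state_dist_sum1 hT t) ler_sum // => s _.
by rewrite ler_piMr ?state_dist_ge0 //; case/andP: (policy_reward01 t s).
Qed.

Lemma step_reward_diff_le T U : is_transition T -> is_transition U -> forall t,
  step_reward d0 Rw gamma T pi t - step_reward d0 Rw gamma U pi t <=
  geometric 1 gamma t - geometric 1 (gamma * (1 - tv_max T U)) t.
Proof.
have g0 : 0 <= gamma by case/andP: gamma01.
move=> hT hU t; rewrite !step_rewardE /geometric /= !mul1r exprMn -mulrBr.
rewrite -[X in _ <= X - _]mulr1 -mulrBr ler_wpM2l ?exprn_ge0 //.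
apply: le_trans (sum_weighted_diff_le _ _ _ _) _.
- exact: state_dist_ge0.
- exact: state_dist_ge0.
- exact: state_dist_sum1.
- exact: policy_reward01.
by rewrite lerD2l lerN2; apply: overlap_ge_pow.
Qed.

Lemma cvg_reward_series T : is_transition T ->
  cvgn (series (step_reward d0 Rw gamma T pi)).
Proof.
move=> hT; apply: series_le_cvg (step_reward_ge0 hT) _ (step_reward_le hT) _.
  by move=> n; rewrite /geometric /= mul1r exprn_ge0 //; case/andP: gamma01.
by apply: is_cvg_geometric_series; case/andP: gamma01 => g0 g1; rewrite ger0_norm.
Qed.

Lemma J_diff_le T U : is_transition T -> is_transition U ->
  J d0 Rw gamma T pi - J d0 Rw gamma U pi <= discount_gap gamma (tv_max T U).
Proof.
move=> hT hU; case/andP: gamma01 => g0 g1.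
have tv0 := tv_max_ge0 T U.
have tv1 := tv_max_le1 hT hU.
have g1' : `|gamma| < 1 by rewrite ger0_norm.
have gtv1 : `|gamma * (1 - tv_max T U)| < 1.
  by rewrite ger0_norm ?mulr_ge0 ?subr_ge0 //; nra.
rewrite /discount_gap -(lim_geometric_series g1') -(lim_geometric_series gtv1) /J.
have cvg_geo := @is_cvg_geometric_series _ 1 _ g1'.
have cvg_geo' := @is_cvg_geometric_series _ 1 _ gtv1.
have cvgT := cvg_reward_series hT; have cvgU := cvg_reward_series hU.
rewrite -!lim_seriesB //; apply: lim_series_le; last exact: step_reward_diff_le.
  exact: is_cvg_seriesB.
exact: is_cvg_seriesB.
Qed.
End PolicyEvaluation.

Lemma unexploitable_of_le_Hbound (R : realType) (S A : finType) (d0 : S -> R)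
    (gamma : R) (Rw : S -> A -> R) (T U : S -> A -> S -> R) (eps : R)
    (Pi : set (policy R S A)) :
  is_dist d0 -> 0 <= gamma < 1 -> (forall s a, 0 <= Rw s a <= 1) ->
  is_transition T -> is_transition U -> 0 < tv_max T U -> 0 < eps ->
  (1 - gamma)^-1 <= Hbound eps (tv_max T U) ->
  (forall pi, Pi pi -> is_policy pi) ->
  unexploitable d0 Rw gamma Pi T U eps.
Proof.
move=> hd0 hg hRw hT hU tv0 eps0 hH hPi [pi [pi' [/hPi hpi [/hPi hpi' [gainT gainU]]]]].
have gapT := J_diff_le hd0 hpi hRw hg hT hU.
have gapU := J_diff_le hd0 hpi' hRw hg hU hT.
rewrite tv_maxC in gapU.
have := hH; rewrite -discount_gap_le // => gap_le.
lra.
Qed.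

Section Example.
Variable R : realType.

Lemma ord2_cases (i : 'I_2) : i = ord0 \/ i = @Ordinal 2 1 isT.
Proof. by case: i => [[|[|]]] // p; [left|right]; apply: val_inj. Qed.

Definition const_policy (a0 : 'I_2) : policy R 'I_2 'I_2 :=
  fun _ _ a => if a == a0 then 1 else 0.

Lemma const_policy_stationary a0 :
  is_policy (const_policy a0) /\ is_stationary (const_policy a0).
Proof.
split => // t s; split => [a|]; first by rewrite /const_policy; case: ifP.
by rewrite !big_ord_recl big_ord0 /const_policy; case: (ord2_cases a0) => -> /=;
  rewrite ?addr0 ?add0r.
Qed.

Lemma ex_T_transition (delta : R) good : 0 <= delta <= 1 -> is_transition (ex_T delta good).
Proof.
move=> /andP[d0 d1] s a; split => [s'|]; first by rewrite /ex_T; repeat case: ifP => _ //; lra.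
rewrite !big_ord_recl big_ord0 /ex_T /=.
case: (ord2_cases s) => -> /=; last by rewrite addr0 add0r.
by case: ifP => _; rewrite ?addr0; lra.
Qed.

Lemma tv_max_ex_T (delta : R) : 0 <= delta -> tv_max (ex_T1 delta) (ex_T2 delta) = delta.
Proof.
move=> d0; rewrite /tv_max /ex_T1 /ex_T2 /ex_T !big_ord_recl !big_ord0 /=.
have -> : 1 - (1 - delta) = delta by ring.
have -> : 1 - delta - 1 = - delta by ring.
have dd : 0 <= delta + delta by lra.
rewrite !subr0 sub0r !subrr normrN !normr0 !addr0 (ger0_norm d0) !maxxx (max_l dd) maxxx (max_l dd).
by field.
Qed.

Definition stay_prob (delta : R) (good a0 : 'I_2) : R := if a0 == good then 1 else 1 - delta.

Lemma state_dist_ex_T (delta : R) good a0 t s :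
  state_dist (@ex_d0 R) (ex_T delta good) (const_policy a0) t s =
  if s == ord0 then stay_prob delta good a0 ^+ t else 1 - stay_prob delta good a0 ^+ t.
Proof.
elim: t s => [|t IH] s; first by rewrite /= /ex_d0 expr0; case: ifP; rewrite ?subrr.
rewrite /= !big_ord_recl !big_ord0 !IH /const_policy /ex_T /stay_prob exprS.
by case: (ord2_cases s) => ->; case: (ord2_cases a0) => ->; case: (ord2_cases good) => -> /=;
  rewrite ?expr1n; ring.
Qed.

Lemma J_ex_T (delta gamma : R) good a0 : 0 <= delta <= 1 -> 0 <= gamma < 1 ->
  J (@ex_d0 R) (@ex_R R) gamma (ex_T delta good) (const_policy a0) =
  (1 - gamma * stay_prob delta good a0)^-1.
Proof.
move=> /andP[d0 d1] /andP[g0 g1].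
have c01 : 0 <= stay_prob delta good a0 <= 1 by rewrite /stay_prob; case: ifP => _; lra.
have gc1 : `|gamma * stay_prob delta good a0| < 1.
  by case/andP: c01 => c0 c1; rewrite ger0_norm ?mulr_ge0 //; nra.
rewrite -(lim_geometric_series gc1) /J; congr (limn (series _)); apply/funext => t.
rewrite /step_reward /geometric /= mul1r exprMn; congr (_ * _).
rewrite !big_ord_recl !big_ord0 !state_dist_ex_T /ex_R /const_policy /=.
by case: (ord2_cases a0) => -> /=; ring.
Qed.
End Example.

Lemma ex_T_exploitable (R : realType) (delta eps gamma : R) :
  0 < delta <= 1 -> 0 <= gamma < 1 -> 0 < eps -> Hbound eps delta < (1 - gamma)^-1 ->
  exploitable (@ex_d0 R) (@ex_R R) gamma [set pi | is_policy pi /\ is_stationary pi]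
    (ex_T1 delta) (ex_T2 delta) eps.
Proof.
move=> /andP[d0 d1] hg eps0 hH; have d01 : 0 <= delta <= 1 by rewrite ltW.
exists (const_policy R ord0), (const_policy R (@Ordinal 2 1 isT)).
do 2 (split; first exact: const_policy_stationary).
rewrite /ex_T1 /ex_T2 !J_ex_T // /stay_prob /= mulr1.
by move: hH; rewrite ltNge -discount_gap_le // -ltNge /discount_gap; lra.
Qed.

Theorem mainTheorem14 (R : realType) :
  (forall (S A : finType) (d0 : S -> R) (gamma : R) (Rw : S -> A -> R)
          (T T' : S -> A -> S -> R) (eps : R),
      is_dist d0 -> 0 <= gamma < 1 ->
      (forall s a, 0 <= Rw s a <= 1) ->
      is_transition T -> is_transition T' -> T <> T' ->
      0 < tv_max T T' -> 0 < eps ->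
      (1 - gamma)^-1 <= Hbound eps (tv_max T T') ->
      forall Pi : set (policy R S A),
        (forall pi, Pi pi -> is_policy pi) ->
        unexploitable d0 Rw gamma Pi T T' eps)
  /\
  (forall (delta eps gamma : R),
      0 < delta <= 1 -> 0 < eps -> 0 <= gamma < 1 ->
      (1 - gamma)^-1 > Hbound eps delta ->
      is_transition (ex_T1 delta) /\ is_transition (ex_T2 delta) /\
      tv_max (ex_T1 delta) (ex_T2 delta) = delta /\
      exploitable (@ex_d0 R) (@ex_R R) gamma
        [set pi | is_policy pi /\ is_stationary pi]
        (ex_T1 delta) (ex_T2 delta) eps).
Proof.
split=> [S A d0 gamma Rw T T' eps hd0 hg hRw hT hT' _ tv0 eps0 hH Pi hPi|].
  exact: unexploitable_of_le_Hbound.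
move=> delta eps gamma hdelta eps0 hg hH.
have d01 : 0 <= delta <= 1 by case/andP: hdelta => d0 ->; rewrite ltW.
split; first exact: ex_T_transition.
split; first exact: ex_T_transition.
split; first by apply: tv_max_ex_T; case/andP: d01.
exact: ex_T_exploitable.
Qed.
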